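(* Let $G=(V,E)$ be a finite connected graph, $p$ a probability vector on $V$ with $p(i)>0$ for all $i$, and consider the Markov chain on $S=(-\mathbb{N}_0)^V$ which moves from $x$ to $T_ix$ with probability $p(i)$, with transition matrix $M$. Then the equation $\pi M=\pi$ has a solution $\pi$ which is a probability distribution on $S$.
   Context: For $x\in S$ and $i\in V$, $T_ix\in S$ is obtained by first setting $x'_i=\max\{x_k:\operatorname{dist}(k,i)\le1\}+1$, $x'_j=x_j$ for $j\ne i$ (dist the graph distance), and then $(T_ix)_j=x'_j-\max_kx'_k$ (height profile after dropping a particle at $i$, seen from the maximum). *)

From HB Require Import structures.
From mathcomp Require Import all_boot all_order all_algebra.
From mathcomp Require Import all_classical all_reals all_analysis.
Set Implicit Arguments. Unset Strict Implicit. Unset Printing Implicit Defensive.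
Import Order.TTheory GRing.Theory Num.Theory.
Local Open Scope ring_scope.

Definition simple_graph (V : finType) (e : rel V) : Prop :=
  symmetric e /\ irreflexive e.
Definition connected_graph (V : finType) (e : rel V) : Prop :=
  forall u v : V, connect e u v.

Definition config (V : finType) := {ffun V -> int}.
Definition state_space (V : finType) : set (config V) :=
  [set x | forall j, x j <= 0].

(* dist(k,i) <= 1  iff  k = i or k adjacent to i *)
Definition nbhd (V : finType) (e : rel V) (i k : V) : bool := (k == i) || e k i.

Definition drop (V : finType) (e : rel V) (i : V) (x : config V) : config V :=
  [ffun j => if j == i
             then (\big[Order.max/x i]_(k | nbhd e i k) x k) + 1
             else x j].

Definition T (V : finType) (e : rel V) (i : V) (x : config V) : config V :=
  let x' := drop e i x in
  [ffun j => x' j - \big[Order.max/x' i]_(k : V) x' k].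

Definition M (R : realType) (V : finType) (e : rel V) (p : V -> R)
  (x y : config V) : R :=
  \sum_(i : V | T e i x == y) p i.

(* The chain iterates the random maps T_i, and some finite word w of letters is
   synchronizing: composing the T_i along w gives a constant map. Such a word is built
   from an order of the vertices in which every vertex is adjacent to an earlier one:
   dropping on the vertices in reverse order and then on the root makes the root a strict
   maximum, and dropping again along the order rebuilds a profile determined by the root
   height alone; T forgets the additive constant. If z is the common image, reading the
   letters from the most recent one backwards, the state is the image of z under the
   letters read before the first occurrence of w. Hence the cycle formula: pi y is
   proportional to the total probability of the w-free words that lead from z to y. The
   normalising constant, the expected length of a w-free word, is finite because the
   probability of avoiding w for k |w| steps is at most (1 - P w)^k. *)
From Pilot Require Import Defs.
From HB Require Import structures.
From mathcomp Require Import all_boot all_order all_algebra.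
From mathcomp Require Import all_classical all_reals all_analysis.
Set Implicit Arguments. Unset Strict Implicit. Unset Printing Implicit Defensive.
Import Order.TTheory GRing.Theory Num.Theory.
Local Open Scope ring_scope.
Local Open Scope classical_set_scope.

Lemma bigmax_addr (R : realDomainType) (I : finType) (P : pred I) (F : I -> R) (x0 c : R) :
  \big[Order.max/x0 + c]_(k | P k) (F k + c) = \big[Order.max/x0]_(k | P k) F k + c.
Proof. by elim/big_ind2: _ => // a b a' b' -> ->; rewrite addr_maxl. Qed.

Section Drop.
Variables (V : finType) (e : rel V).
Local Notation D := (Defs.drop e).

Lemma drop_ne i x j : j != i -> D i x j = x j.
Proof. by move=> /negPf ji; rewrite ffunE ji. Qed.

Lemma drop_eq i x : D i x i = \big[Order.max/x i]_(k | nbhd e i k) x k + 1.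
Proof. by rewrite ffunE eqxx. Qed.

Lemma drop_shift i (x y : config V) c : (forall j, x j = y j + c) ->
  forall j, D i x j = D i y j + c.
Proof.
move=> xy j; rewrite !ffunE; case: (j == i); last exact: xy.
rewrite [RHS]addrAC -[in RHS]bigmax_addr -xy; congr (_ + _); exact: eq_bigr.
Qed.

Definition recentre (y : config V) (i : V) : config V :=
  [ffun j => y j - \big[Order.max/y i]_(k : V) y k].

Lemma T_recentre i x : T e i x = recentre (D i x) i.
Proof. by []. Qed.

Lemma recentre_shift (y y' : config V) i c : (forall j, y j = y' j + c) ->
  recentre y i = recentre y' i.
Proof.
move=> yy'; apply/ffunP => j; rewrite !ffunE.
have -> : \big[Order.max/y i]_(k : V) y k = \big[Order.max/y' i]_(k : V) y' k + c.
  by rewrite -bigmax_addr yy'; apply: eq_bigr => k _.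
by rewrite yy' opprD addrACA subrr addr0.
Qed.

Lemma T_shift i (x y : config V) c : (forall j, x j = y j + c) -> T e i x = T e i y.
Proof. by move=> xy; rewrite !T_recentre; apply: recentre_shift; apply: drop_shift xy. Qed.

Lemma foldr_T_cons i w (x : config V) :
  foldr (T e) x (i :: w) = recentre (foldr D x (i :: w)) i.
Proof.
elim: w i => [//|j w IH] i.
rewrite [LHS]/= -/(foldr (T e) x (j :: w)) IH.
by apply: T_shift => k; rewrite ffunE.
Qed.

Lemma foldr_drop_notin (l : seq V) (x : config V) j : j \notin l -> foldr D x l j = x j.
Proof.
elim: l => //= a l IH; rewrite inE negb_or => /andP[ja jl].
by rewrite drop_ne // IH.
Qed.

Lemma foldr_drop_gt_nbr (l : seq V) (x : config V) a b :
  uniq l -> a \in l -> b \notin l -> e b a -> x b < foldr D x l a.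
Proof.
elim: l => //= c l IH /andP[cl ul]; rewrite inE => al; rewrite inE negb_or.
move=> /andP[bc bl] eba.
have [ac|nac] := eqVneq a c; last first.
  by rewrite drop_ne //; apply: IH => //; move: al; rewrite (negPf nac).
subst c; rewrite drop_eq ltzD1 -(foldr_drop_notin x bl).
by apply: le_bigmax_cond; rewrite /nbhd eba orbT.
Qed.
End Drop.

Section RootedOrder.
Variables (V : finType) (e : rel V).
Hypothesis e_sym : symmetric e.
Local Notation D := (Defs.drop e).

Inductive rooted_order (r : V) : seq V -> Prop :=
| rooted_nil : rooted_order r [::]
| rooted_rcons vs b u : rooted_order r vs -> u \in r :: vs -> e u b ->
    rooted_order r (rcons vs b).

(* Dropping on the vertices in reverse order and then on the root: each vertex ends up
   below the vertex it was attached to, hence below the root. *)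
Lemma foldr_drop_lt_root r vs : rooted_order r vs -> uniq (r :: vs) ->
  forall x v, v \in vs -> foldr D x (r :: vs) v < foldr D x (r :: vs) r.
Proof.
elim=> // ws b u _ IH ur eub.
rewrite -rcons_cons rcons_uniq => /andP[bn un] x v.
rewrite !foldr_rcons mem_rcons inE => /orP[/eqP ->|]; last exact: IH.
set y := D b x.
have ltu : foldr D y (r :: ws) b < foldr D y (r :: ws) u.
  by rewrite foldr_drop_notin //; apply: foldr_drop_gt_nbr; rewrite // e_sym.
move: ur; rewrite inE => /orP[/eqP ur|uvs]; first by rewrite ur in ltu.
exact: lt_trans ltu (IH un y u uvs).
Qed.

Lemma foldr_drop_rev_profile r vs : rooted_order r vs -> uniq (r :: vs) ->
  exists2 d : V -> int, forall k, 0 <= d k &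
    forall y : config V, (forall v, v != r -> y v < y r) ->
    forall v, v \in r :: vs -> foldr D y (rev vs) v = y r + d v.
Proof.
elim=> [_|ws b u _ IH ur eub].
  by exists (fun _ => 0) => // y _ v; rewrite inE => /eqP->; rewrite addr0.
rewrite -rcons_cons rcons_uniq => /andP[bn un].
have [d d_ge0 Hd] := IH un.
pose M := \big[Order.max/0]_(k | nbhd e b k && (k \in r :: ws)) d k.
have out_prob_ge0 : 0 <= M by apply: bigmax_ge_id.
exists (fun v => if v == b then M + 1 else d v) => [k|y ymax v].
  by case: ifP; rewrite ?addr_ge0.
rewrite rev_rcons mem_rcons inE /=.
have [-> _|vb /= vin] := eqVneq v b; last by rewrite drop_ne // Hd.
set z := foldr D y (rev ws).
have zin k : k \in r :: ws -> z k = y r + d k by exact: Hd.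
have zout k : k \notin r :: ws -> z k < y r.
  move=> kn; rewrite /z foldr_drop_notin ?mem_rev; last exact: contra (@mem_behead _ (r :: ws) k) kn.
  by apply: ymax; apply: contraNneq kn => ->; rewrite mem_head.
rewrite drop_eq addrA; congr (_ + _); apply/eqP; rewrite eq_le; apply/andP; split.
  apply: bigmax_le => [|k nk]; first by rewrite ltW // (lt_le_trans (zout _ bn)) ?lerDl.
  have [kin|kn] := boolP (k \in r :: ws); last by rewrite ltW // (lt_le_trans (zout _ kn)) ?lerDl.
  by rewrite zin // lerD2l; apply: le_bigmax_cond; rewrite nk kin.
rewrite -lerBrDl; apply: bigmax_le => [|k /andP[nk kin]].
  rewrite subr_ge0 (le_trans _ (le_bigmax_cond _ _ (_ : nbhd e b u))) ?zin ?lerDl //.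
  by rewrite /nbhd eub orbT.
by rewrite lerBrDl -zin //; apply: le_bigmax_cond.
Qed.
End RootedOrder.

Section Synchronization.
Variables (V : finType) (e : rel V).
Hypotheses (e_sym : symmetric e) (e_conn : forall u v : V, connect e u v).
Local Notation D := (Defs.drop e).

Lemma exists_edge_out (A : pred V) r v : r \in A -> v \notin A ->
  exists u b, [/\ u \in A, b \notin A & e u b].
Proof.
move=> rA vA.
have [[u b] /and3P[uA bA eub]|noedge] :=
  pickP [pred ub : V * V | [&& ub.1 \in A, ub.2 \notin A & e ub.1 ub.2]].
  by exists u, b.
suff closedA : closed_mem e (mem A) by move: vA; rewrite -(closed_connect closedA (e_conn r v)) rA.
have out x y : x \in A -> y \notin A -> e x y = false.
  by move=> xA yA; have /= := noedge (x, y); rewrite xA yA.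
move=> x y exy; apply/idP/idP => [xA|yA]; apply/negPn/negP => nA.
  by rewrite out in exy.
by rewrite e_sym out in exy.
Qed.

Lemma rooted_order_exists r :
  exists vs, [/\ rooted_order e r vs, uniq (r :: vs) & forall v, v \in r :: vs].
Proof.
suff grow n : exists vs, [/\ rooted_order e r vs, uniq (r :: vs) &
    (n <= size vs)%N \/ forall v, v \in r :: vs].
  have [vs [ovs uvs [too_long|cover]]] := grow #|V|; last by exists vs.
  by have := max_card (mem (r :: vs)); rewrite (card_uniqP uvs) /= ltnNge too_long.
elim: n => [|n [vs [ovs uvs [le_n|cover]]]]; last by exists vs; split => //; right.
  by exists [::]; split; [constructor | | left].
have [cover|/forallPn[v vn]] := boolP [forall v, v \in r :: vs].
  by exists vs; split => //; right => v; apply: (forallP cover).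
have [u [b [uin bn eub]]] := exists_edge_out (mem_head r vs) vn.
exists (rcons vs b); split; first exact: rooted_rcons uin eub.
  by rewrite -rcons_cons rcons_uniq bn.
by left; rewrite size_rcons ltnS.
Qed.

Lemma synchronizing_word (r : V) : exists2 w : seq V, w != [::] &
  forall x y : config V, foldr (T e) x w = foldr (T e) y w.
Proof.
have [vs [ovs uvs cover]] := rooted_order_exists r.
have [d _ profile] := foldr_drop_rev_profile ovs uvs.
have dropE (x : config V) v : foldr D x (rev vs ++ r :: vs) v = foldr D x (r :: vs) r + d v.
  rewrite foldr_cat profile // => u ur.
  apply: (foldr_drop_lt_root e_sym ovs uvs).
  by move: (cover u); rewrite inE (negPf ur).
exists (rev vs ++ r :: vs); first by case: (rev vs).
move=> x y; case Ew: (rev vs ++ r :: vs) dropE => [|i w] dropE; first by case: (rev vs) Ew.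
rewrite !foldr_T_cons.
apply: (recentre_shift i (c := foldr D x (r :: vs) r - foldr D y (r :: vs) r)) => v.
by rewrite !dropE [RHS]addrAC [_ + (_ - _)]addrC subrK.
Qed.
End Synchronization.

Lemma partial_sums_le_of_block_contraction (R : realType) (beta : nat -> R) (L : nat) (q : R) :
  0 <= q < 1 -> (forall k, 0 <= beta k <= 1) ->
  (forall k, beta (L + k)%N <= q * beta k) ->
  forall N, \sum_(0 <= k < N) beta k <= L%:R / (1 - q).
Proof.
move=> /andP[q_ge0 q_lt1] beta01 contract N.
have beta_ge0 k : 0 <= beta k by case/andP: (beta01 k).
pose B n := \sum_(0 <= k < n) beta k.
have B_mono : B N <= B (L + N)%N.
  rewrite /B addnC [leRHS](big_cat_nat (n := N)) ?leq_addr //= lerDl.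
  by apply: sumr_ge0 => k _.
have head_le : B L <= L%:R.
  apply: le_trans (ler_sum _ (fun k _ => (andP (beta01 k)).2)) _.
  by rewrite sumr_const_nat subn0.
have tail_le : \sum_(0 <= k < N) beta (k + L)%N <= q * B N.
  by rewrite /B mulr_sumr; apply: ler_sum => k _; rewrite addnC.
have B_rec : B (L + N)%N <= L%:R + q * B (L + N)%N.
  rewrite {1}/B (big_cat_nat (n := L)) ?leq_addr //= -{2}(add0n L) big_addn addKn.
  apply: lerD => //; apply: le_trans tail_le _.
  by apply: ler_wpM2l.
apply: le_trans B_mono _; rewrite ler_pdivlMr ?subr_gt0 //.
by rewrite mulrBr mulr1 lerBlDr mulrC.
Qed.

Section EsumExtra.
Local Open Scope ereal_scope.
Variables (R : realType) (T : choiceType).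

Lemma esum_subset (I J : set T) (a : T -> \bar R) : I `<=` J ->
  \esum_(x in I) a x <= \esum_(x in J) a x.
Proof.
move=> IJ; apply: ge_ereal_sup => _ [X [finX XI] <-]; apply: esum_ge.
by exists X => //; split => //; exact: subset_trans XI IJ.
Qed.

Let le_esumZ (I : set T) (a : T -> \bar R) (c : R) : (0 <= c)%R ->
  (forall x, I x -> 0 <= a x) ->
  \esum_(x in I) (c%:E * a x) <= c%:E * \esum_(x in I) a x.
Proof.
move=> c0 a0; apply: ge_ereal_sup => _ [X [finX XI] <-].
rewrite fsbig_finite // big_seq -ge0_sume_distrr; last first.
  by move=> x; rewrite in_fset_set // => /set_mem /XI /a0.
apply: lee_wpmul2l; first by rewrite lee_fin.
rewrite -big_seq -fsbig_finite //; apply: esum_ge; by exists X.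
Qed.

Lemma esumZ (I : set T) (a : T -> \bar R) (c : R) : (0 <= c)%R ->
  (forall x, I x -> 0 <= a x) ->
  \esum_(x in I) (c%:E * a x) = c%:E * \esum_(x in I) a x.
Proof.
move=> c_ge0 a_ge0; have [->|c_neq0] := eqVneq c 0%R.
  by rewrite mul0e esum1 // => x _; rewrite mul0e.
have c_gt0 : (0 < c)%R by rewrite lt_def c_neq0.
apply/eqP; rewrite eq_le le_esumZ //=.
have ca_ge0 x : I x -> 0 <= c%:E * a x by move=> Ix; rewrite mule_ge0 ?lee_fin // a_ge0.
have cV_ge0 : (0 <= c^-1)%R by rewrite invr_ge0 ltW.
have le_cV := le_esumZ cV_ge0 ca_ge0.
rewrite (eq_esum (b := a)) in le_cV; last by move=> x _; rewrite muleA -EFinM mulVf // mul1e.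
apply: le_trans (lee_wpmul2l _ le_cV) _; first by rewrite lee_fin ltW.
by rewrite muleA -EFinM mulfV // mul1e.
Qed.
End EsumExtra.

Section SynchronizedChain.
Local Open Scope ereal_scope.
Variables (R : realType) (V : finType) (X : choiceType) (step : V -> X -> X).
Variables (p : V -> R) (w : seq V) (z : X).
Hypotheses (p_gt0 : forall i, (0 < p i)%R) (p_sum1 : (\sum_i p i = 1)%R).
Hypotheses (w_neq0 : w != [::]) (w_sync : forall x, foldr step x w = z).

Definition word_prob (u : seq V) : R := \prod_(i <- u) p i.
Definition w_free : set (seq V) := [set u | ~~ infix w u].
Definition run (u : seq V) : X := foldr step z u.

Lemma word_prob_gt0 u : (0 < word_prob u)%R.
Proof. by rewrite /word_prob; elim: u => [|i u IH]; rewrite ?big_nil ?big_cons ?mulr_gt0. Qed.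

Lemma word_probE_ge0 u : 0 <= (word_prob u)%:E.
Proof. by rewrite lee_fin ltW ?word_prob_gt0. Qed.

Lemma word_prob_nil : word_prob [::] = 1%R.
Proof. exact: big_nil. Qed.

Lemma word_prob_cons i u : word_prob (i :: u) = (p i * word_prob u)%R.
Proof. exact: big_cons. Qed.

Lemma word_prob_cat u v : word_prob (u ++ v) = (word_prob u * word_prob v)%R.
Proof. exact: big_cat. Qed.

Lemma esum_nonempty_words (Y : set (seq V)) (g : seq V -> \bar R) :
  (forall s, 0 <= g s) ->
  \esum_(s in Y `&` ~` [set [::]]) g s =
  \sum_(i : V) \esum_(u in [set u | Y (i :: u)]) g (i :: u).
Proof.
move=> g_ge0.
transitivity (\esum_(s in Y `&` ~` [set [::]])
                 \sum_(i : V) (if s \in range (cons i) then g s else 0)).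
  apply: eq_esum => -[[_ /(_ erefl)//]|j u _].
  rewrite (bigD1 j) //= big1 ?adde0 => [|i ij].
    by rewrite ifT //; apply: mem_set; exists u.
  by case: ifPn => // /set_mem [u' _ [ji _]]; rewrite ji eqxx in ij.
rewrite esum_sum; last by move=> s i _ _; case: ifP.
apply: eq_bigr => i _; rewrite -esum_mkcondr.
rewrite (reindex_esum [set u | Y (i :: u)] _ (cons i)) //; split.
- by move=> u Yu; split; [split|exists u].
- by move=> u v _ _ [].
- by move=> s [[Ys _] [u _ su]]; exists u; rewrite /= su.
Qed.

Lemma esum_words_of_size n : \esum_(u in [set u : seq V | size u = n]) (word_prob u)%:E = 1.
Proof.
elim: n => [|n IH].
  rewrite (_ : [set u | size u = 0%N] = [set [::]]).
    by rewrite esum_set1 ?word_probE_ge0 // word_prob_nil.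
  by apply/seteqP; split => u /=; [move/size0nil|move=> ->].
rewrite -(setIidl (_ : [set u : seq V | size u = n.+1] `<=` ~` [set [::]])); last by case.
rewrite esum_nonempty_words; last exact: word_probE_ge0.
transitivity (\sum_(i : V) (p i)%:E * \esum_(u in [set u : seq V | size u = n]) (word_prob u)%:E)%E.
  apply: eq_bigr => i _; rewrite -esumZ ?(ltW (p_gt0 i)) //; last by move=> *; exact: word_probE_ge0.
  rewrite (_ : [set u | size (i :: u) = n.+1] = [set u | size u = n]); last first.
    by apply/seteqP; split => u /= => [[]|->].
  by apply: eq_esum => u _; rewrite word_prob_cons EFinM.
by rewrite IH; under eq_bigr do rewrite mule1; rewrite sumEFin p_sum1.
Qed.

Lemma esum_words_of_size_neq v :
  \esum_(u in [set u : seq V | size u = size v] `&` ~` [set v]) (word_prob u)%:E =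
  (1 - word_prob v)%:E.
Proof.
have := esum_words_of_size (size v).
rewrite (esumID [set v]); last by move=> *; exact: word_probE_ge0.
rewrite setIidr; last by move=> u ->.
rewrite esum_set1 ?word_probE_ge0 //.
set Y := \esum_(u in _ `&` _) _ => sum1.
have Y_fin : Y \is a fin_num.
  rewrite ge0_fin_numE; last by apply: esum_ge0 => *; exact: word_probE_ge0.
  by rewrite (@le_lt_trans _ _ 1) ?ltry // -sum1 leeDr ?word_probE_ge0.
have sum1R : (word_prob v + fine Y)%R = 1%R by apply: EFin_inj; rewrite EFinD fineK.
by rewrite -sum1R [(word_prob v + _)%R]addrC addrK fineK.
Qed.

Definition w_free_mass n := \esum_(u in w_free `&` [set u | size u = n]) (word_prob u)%:E.

Lemma w_free_mass_ge0 n : 0 <= w_free_mass n.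
Proof. by apply: esum_ge0 => u _; exact: word_probE_ge0. Qed.

Lemma w_free_mass_le1 n : w_free_mass n <= 1.
Proof. by rewrite -(esum_words_of_size n); apply: esum_subset; exact: subIsetr. Qed.

Lemma w_free_mass_fin n : w_free_mass n \is a fin_num.
Proof. by rewrite ge0_fin_numE ?w_free_mass_ge0 // (le_lt_trans (w_free_mass_le1 n)) ?ltry. Qed.

(* A [w]-free word of length [size w + n] is [v ++ u] with [v != w] of length [size w]
   and [u] [w]-free of length [n]. *)
Lemma w_free_mass_rec n :
  w_free_mass (size w + n) <= (1 - word_prob w)%:E * w_free_mass n.
Proof.
set L := size w.
set heads := [set v : seq V | size v = L] `&` ~` [set w].
set tails := w_free `&` [set u : seq V | size u = n].
have split_word : w_free `&` [set u | size u = (L + n)%N] `<=`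
    [set vu.1 ++ vu.2 | vu in heads `*` tails].
  move=> s [s_free s_size]; exists (take L s, drop L s); last exact: cat_take_drop.
  split; split => /=.
  - by rewrite size_takel // s_size leq_addr.
  - move=> /= tw; move: s_free; rewrite /w_free /= => /negP; apply.
    by apply: prefixW; rewrite prefixE tw eqxx.
  - apply: contra s_free => h.
    by rewrite -(cat_take_drop L s); apply: infix_catl.
  - by rewrite size_drop s_size addKn.
apply: (le_trans (esum_subset _ split_word)).
rewrite esum_image; last first.
  move=> [v1 u1] [v2 u2] /set_mem [[/= s1 _] _] /set_mem [[/= s2 _] _] /= e12.
  by rewrite -(take_size_cat u1 s1) e12 take_size_cat ?s2 // -(drop_size_cat u1 s1) e12 drop_size_cat ?s2.
rewrite (_ : heads `*` tails = heads `*`` (fun _ => tails)) //.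
rewrite -(esum_esum (a := fun v u => (word_prob (v ++ u))%:E)); last by move=> *; exact: word_probE_ge0.
under eq_esum => v _.
  under eq_esum => u _ do rewrite word_prob_cat EFinM.
  rewrite esumZ; [|exact/ltW/word_prob_gt0|by move=> *; exact: word_probE_ge0].
  over.
rewrite /= -/(w_free_mass n) -(fineK (w_free_mass_fin n)).
under eq_esum => v _ do rewrite muleC.
rewrite esumZ; [|by rewrite fine_ge0 // w_free_mass_ge0|by move=> *; exact: word_probE_ge0].
by rewrite esum_words_of_size_neq muleC.
Qed.

Definition w_free_total := \esum_(u in w_free) (word_prob u)%:E.

Lemma w_free_total_fin : w_free_total \is a fin_num.
Proof.
have -> : w_free_total = \esum_(k in [set: nat]) w_free_mass k.
  rewrite -esum_bigcupT; last by move=> *; exact: word_probE_ge0.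
    congr esum; apply/seteqP; split => [u u_free|u [k _ []//]].
    by exists (size u).
  by move=> i j _ _ [u [[_ <-] [_ <-]]].
rewrite -nneseries_esumT; last exact: w_free_mass_ge0.
have w_prob_le1 : (word_prob w <= 1)%R.
  rewrite -subr_ge0 -lee_fin -esum_words_of_size_neq.
  by apply: esum_ge0 => *; exact: word_probE_ge0.
have bound : \sum_(0 <= k <oo) w_free_mass k <= ((size w)%:R / (1 - (1 - word_prob w)))%:E.
  apply: lime_le; first by apply: is_cvg_nneseries => *; exact: w_free_mass_ge0.
  apply: nearW => N.
  rewrite -(eq_bigr _ (fun k _ => fineK (w_free_mass_fin k))) sumEFin lee_fin.
  apply: partial_sums_le_of_block_contraction.
  - by rewrite subr_ge0 w_prob_le1 /= ltrBlDl ltrDr word_prob_gt0.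
  - by move=> k; rewrite -!lee_fin !fineK ?w_free_mass_fin ?w_free_mass_ge0 ?w_free_mass_le1.
  - by move=> k; rewrite -lee_fin EFinM !fineK ?w_free_mass_fin ?w_free_mass_rec.
rewrite ge0_fin_numE; last by apply: nneseries_ge0 => *; exact: w_free_mass_ge0.
exact: le_lt_trans bound (ltry _).
Qed.

Lemma w_free_nil : w_free [::].
Proof. by rewrite /w_free /=; case: w w_neq0. Qed.

Lemma w_free_cons_subset i : [set u | w_free (i :: u)] `<=` w_free.
Proof. by move=> u; apply: contra => wu; rewrite infix_consl wu orbT. Qed.

(* A word that has just become non-[w]-free starts with [w], which resets the chain to [z]. *)
Lemma run_exit i u : w_free u -> ~ w_free (i :: u) -> run (i :: u) = z.
Proof.
move=> u_free not_free; have : infix w (i :: u) by apply/negPn/negP.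
rewrite infix_consl (negPf u_free) orbF => /seq.prefixP[s ->].
by rewrite /run foldr_cat w_sync.
Qed.

Lemma w_free_total_split : w_free_total =
  1 + \sum_(i : V) \esum_(u in [set u | w_free (i :: u)]) (word_prob (i :: u))%:E.
Proof.
rewrite /w_free_total (esumID [set [::]]); last by move=> *; exact: word_probE_ge0.
rewrite esum_nonempty_words; last exact: word_probE_ge0.
rewrite setIidr => [|_ ->]; last exact: w_free_nil.
by rewrite esum_set1 ?word_probE_ge0 // word_prob_nil.
Qed.

Lemma w_free_total_ge1 : 1 <= w_free_total.
Proof.
apply: le_trans (esum_subset _ (_ : [set [::]] `<=` w_free)); last by move=> _ ->; exact: w_free_nil.
by rewrite esum_set1 ?word_probE_ge0 ?word_prob_nil.
Qed.

Definition exit_mass (i : V) :=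
  \esum_(u in w_free `&` ~` [set u | w_free (i :: u)]) (p i * word_prob u)%:E.

(* Average the identity [w_free_total = sum_i p i * w_free_total] over the first letter and
   compare with [w_free_total_split]; finiteness of the total allows the cancellation. *)
Lemma sum_exit_mass : \sum_(i : V) exit_mass i = 1.
Proof.
set S := \sum_(i : V) \esum_(u in [set u | w_free (i :: u)]) (word_prob (i :: u))%:E.
have S_ge0 : 0 <= S by apply: sume_ge0 => i _; apply: esum_ge0 => *; exact: word_probE_ge0.
have by_first_letter : w_free_total = S + \sum_(i : V) exit_mass i.
  rewrite -big_split /= -[LHS]mul1e -p_sum1 -sumEFin ge0_sume_distrl; last first.
    by move=> i _; rewrite lee_fin ltW.
  apply: eq_bigr => i _.
  rewrite -esumZ; [|exact/ltW|by move=> *; exact: word_probE_ge0].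
  rewrite (esumID [set u | w_free (i :: u)]); last first.
    by move=> *; rewrite -EFinM lee_fin mulr_ge0 ?ltW ?word_prob_gt0.
  rewrite setIidr; last exact: w_free_cons_subset.
  congr (_ + _).
  by apply: eq_esum => u _; rewrite word_prob_cons EFinM.
have S_fin : S \is a fin_num.
  by have := w_free_total_fin; rewrite w_free_total_split fin_numD => /andP[].
rewrite -(addeK (\sum_i exit_mass i) S_fin) [_ + S]addeC -by_first_letter.
by rewrite w_free_total_split addeK.
Qed.

Definition cycle_weight (y : X) := \esum_(u in w_free `&` [set u | run u = y]) (word_prob u)%:E.

Lemma cycle_weight_ge0 y : 0 <= cycle_weight y.
Proof. by apply: esum_ge0 => *; exact: word_probE_ge0. Qed.

Definition arrival_weight (y : X) (i : V) (u : seq V) : \bar R :=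
  ((if run (i :: u) == y then p i * word_prob u else 0)%R)%:E.

Lemma arrival_weight_ge0 y i u : 0 <= arrival_weight y i u.
Proof.
by rewrite lee_fin; case: ifP => // _; rewrite mulr_ge0 ?ltW ?word_prob_gt0.
Qed.

Lemma cycle_weight_split y : cycle_weight y = (if z == y then 1 else 0) +
  \sum_(i : V) \esum_(u in [set u | w_free (i :: u)]) arrival_weight y i u.
Proof.
rewrite /cycle_weight (esumID [set [::]]); last by move=> *; exact: word_probE_ge0.
rewrite esum_nonempty_words; last exact: word_probE_ge0.
congr (_ + _).
  case: (eqVneq z y) => [zy|zy].
    rewrite setIidr => [|_ ->]; last by split; [exact: w_free_nil | exact: zy].
    by rewrite esum_set1 ?word_probE_ge0 ?word_prob_nil.
  by rewrite esum1 // => u [[_ run_y] /= u0]; move: zy; rewrite -run_y u0 eqxx.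
apply: eq_bigr => i _.
rewrite (_ : [set u | (w_free `&` _) (i :: u)] =
  [set u | w_free (i :: u)] `&` [set u | run (i :: u) = y]) //.
rewrite esum_mkcondr; apply: eq_esum => u _.
rewrite /arrival_weight word_prob_cons; case: (eqVneq (run (i :: u)) y) => [<-|ne].
  by rewrite ifT //; apply: mem_set.
by rewrite ifF //; apply/negP => /set_mem; apply/eqP.
Qed.

Lemma esum_exit_arrival_weight y i :
  \esum_(u in w_free `&` ~` [set u | w_free (i :: u)]) arrival_weight y i u =
  if z == y then exit_mass i else 0.
Proof.
case: (eqVneq z y) => [zy|zy].
  by apply: eq_esum => u [u_free not_free]; rewrite /arrival_weight run_exit // zy eqxx.
by apply: esum1 => u [u_free not_free]; rewrite /arrival_weight run_exit // (negPf zy).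
Qed.

(* One more step either keeps the word [w]-free, or completes [w] and returns to [z];
   the latter has total mass one by [sum_exit_mass]. *)
Lemma cycle_weight_invariant (y : X) :
  \esum_(u in w_free) (word_prob u * \sum_(i | step i (run u) == y) p i)%:E = cycle_weight y.
Proof.
transitivity (\esum_(u in w_free) \sum_(i : V) arrival_weight y i u).
  apply: eq_esum => u _; rewrite sumEFin mulr_sumr big_mkcond /=; congr (_%:E).
  by apply: eq_bigr => i _; rewrite /arrival_weight /=; case: ifP; rewrite // mulrC.
rewrite esum_sum; last by move=> *; exact: arrival_weight_ge0.
rewrite cycle_weight_split.
have -> : (if z == y then 1 else 0) = \sum_(i : V) if z == y then exit_mass i else 0.
  by case: ifP => _; [rewrite sum_exit_mass | rewrite big1].
rewrite addeC -big_split /=; apply: eq_bigr => i _.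
rewrite (esumID [set u | w_free (i :: u)]) => [|*]; last exact: arrival_weight_ge0.
by rewrite setIidr ?esum_exit_arrival_weight //; exact: w_free_cons_subset.
Qed.

Section InvariantSet.
Variable S : set X.
Hypothesis S_step : forall i x, S (step i x).

Lemma run_in u : S (run u).
Proof.
case: u => [|i u]; last exact: S_step.
by rewrite /run -(w_sync z); case: w w_neq0 => // i w' _; exact: S_step.
Qed.

Lemma esum_by_run (h : seq V -> \bar R) : (forall u, 0 <= h u) ->
  \esum_(x in S) \esum_(u in w_free `&` [set u | run u = x]) h u = \esum_(u in w_free) h u.
Proof.
move=> h_ge0; rewrite (esum_esum (a := fun x u => h u)) //.
rewrite (reindex_esum w_free _ (fun u => (run u, u))) //; split.
- by move=> u u_free; split; [exact: run_in | split].
- by move=> u v _ _ [_ ->].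
- by move=> [x u] /= [Sx [u_free <-]]; exists u.
Qed.

Theorem stationary_of_synchronizing : exists pi : X -> R,
  (forall x, (0 <= pi x)%R) /\ (forall x, ~ S x -> pi x = 0%R) /\
  (\esum_(x in S) (pi x)%:E = 1) /\
  (forall y, S y -> (pi y)%:E = \esum_(x in S) (pi x * \sum_(i | step i x == y) p i)%:E).
Proof.
have total_gt0 : (0 < fine w_free_total)%R.
  by rewrite -lte_fin fineK ?w_free_total_fin // (lt_le_trans _ w_free_total_ge1).
have weight_fin x : cycle_weight x \is a fin_num.
  rewrite ge0_fin_numE ?cycle_weight_ge0 //.
  apply: le_lt_trans (esum_subset _ (@subIsetl _ w_free _)) _.
  by rewrite -ge0_fin_numE ?w_free_total_fin // (le_trans _ w_free_total_ge1).
pose c := (fine w_free_total)^-1%R.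
have c_ge0 : (0 <= c)%R by rewrite invr_ge0 ltW.
exists (fun x => fine (cycle_weight x) / fine w_free_total)%R.
have piE x : ((fine (cycle_weight x) / fine w_free_total)%R)%:E = c%:E * cycle_weight x.
  by rewrite mulrC EFinM fineK.
split=> [x|]; first by apply: divr_ge0; [exact: fine_ge0 (cycle_weight_ge0 x) | exact: ltW].
split.
  move=> x not_Sx; rewrite /cycle_weight esum1 ?mul0r // => u [_ run_x].
  by rewrite -run_x in not_Sx; have := run_in u.
split.
  under eq_esum => x _ do rewrite piE.
  rewrite esumZ // ?esum_by_run; [|exact: word_probE_ge0|by move=> *; exact: cycle_weight_ge0].
  by rewrite -/w_free_total -(fineK w_free_total_fin) -EFinM mulVf ?gt_eqF.
move=> y Sy.
have out_prob_ge0 x : (0 <= \sum_(i | step i x == y) p i)%R by apply: sumr_ge0 => i _; exact: ltW.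
under eq_esum => x _ do rewrite EFinM piE -muleA.
rewrite esumZ //; last by move=> x _; rewrite mule_ge0 ?cycle_weight_ge0 ?lee_fin.
rewrite piE -cycle_weight_invariant -esum_by_run; last first.
  by move=> u; rewrite lee_fin mulr_ge0 ?out_prob_ge0 // ltW ?word_prob_gt0.
congr (_ * _); apply: eq_esum => x _; rewrite /cycle_weight muleC -esumZ //.
  by apply: eq_esum => u [_ <-]; rewrite -EFinM mulrC.
by move=> *; exact: word_probE_ge0.
Qed.
End InvariantSet.

End SynchronizedChain.

Lemma T_in_state_space (V : finType) (e : rel V) i (x : config V) : state_space (T e i x).
Proof. by move=> j; rewrite ffunE subr_le0; exact: le_bigmax. Qed.

Unset Implicit Arguments.
Theorem mainTheorem4 (R : realType) (V : finType) (e : rel V)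
  (He : simple_graph e) (Hconn : connected_graph e)
  (p : V -> R) (Hp_pos : forall i, 0 < p i) (Hp_sum : \sum_(i : V) p i = 1) :
  exists pi : config V -> R,
    (forall x, 0 <= pi x) /\
    (forall x, ~ @state_space V x -> pi x = 0) /\
    (\esum_(x in @state_space V) (pi x)%:E = 1%E) /\
    (forall y, @state_space V y ->
       (pi y)%:E = \esum_(x in @state_space V) (pi x * M e p x y)%:E).
Proof.
have [r _|V_empty] := pickP (@predT V); last first.
  by move: Hp_sum; rewrite big_pred0 // => /eqP; rewrite eq_sym oner_eq0.
have [w w_neq0 w_sync] := synchronizing_word He.1 Hconn r.
pose z := foldr (T e) [ffun => 0] w.
have w_to_z x : foldr (T e) x w = z by exact: w_sync.
exact: stationary_of_synchronizing Hp_pos Hp_sum w_neq0 w_to_z _ (@T_in_state_space V e).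
Qed.
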